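(* There exists a Heffter array $H(n;k)$ for all $n\equiv 1,3 \pmod 4$ and $k\equiv 2\pmod 4$ with $n>k\ge 6$.
   Context: A Heffter array $H(n;k)$ is an $n\times n$ array in which some cells are filled with nonzero integers and the others are empty, such that: each row and each column contains exactly $k$ filled cells; the entries of every row and of every column sum to $0$ modulo $2nk+1$; and for each integer $1\le x\le nk$, exactly one of $x$ or $-x$ appears in the array, and it appears exactly once. *)

From mathcomp Require Import all_boot all_order all_algebra.
Set Implicit Arguments. Unset Strict Implicit. Unset Printing Implicit Defensive.
Import GRing.Theory Num.Theory.
Local Open Scope ring_scope.

(* A partially filled n x n array of integers: None = empty cell. *)
Definition parray (n : nat) := 'I_n -> 'I_n -> option int.

Definition filled n (A : parray n) (i j : 'I_n) : bool := A i j != None.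

Definition entry n (A : parray n) (i j : 'I_n) : int := odflt 0 (A i j).

Definition is_heffter (n k : nat) (A : parray n) : Prop :=
  (forall i j, A i j != Some 0) /\
  (forall i : 'I_n, #|[set j | filled A i j]| = k) /\
  (forall j : 'I_n, #|[set i | filled A i j]| = k) /\
  (forall i : 'I_n, ((\sum_(j < n) entry A i j) %% (2 * n * k + 1)%:Z)%Z = 0) /\
  (forall j : 'I_n, ((\sum_(i < n) entry A i j) %% (2 * n * k + 1)%:Z)%Z = 0) /\
  (forall x : nat, (1 <= x <= n * k)%N ->
     #|[set ij : 'I_n * 'I_n | (A ij.1 ij.2 == Some x%:Z) || (A ij.1 ij.2 == Some (- x%:Z))]| = 1%N).
Arguments is_heffter : clear implicits.

From mathcomp Require Import all_boot all_order all_algebra.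
From mathcomp Require Import zify.
Set Implicit Arguments. Unset Strict Implicit. Unset Printing Implicit Defensive.
Import GRing.Theory Num.Theory.

(* Write k = 4p + 6.  The array is the union of k cyclic diagonals: diagonal r
   consists of the cells (j + a_r, j + a_r + s_r) mod n, j < n, where the
   shifts s_r = 0, 1, ..., k - 2, k are distinct modulo n because k < n, so
   every row and every column meets every diagonal exactly once.  The entries
   on diagonal r are, up to sign, the n integers of the block (r n, (r+1) n],
   so each magnitude in [1, nk] occurs exactly once.  With the signs
   -,+,+,- on every quadruple of consecutive diagonals and -,+,-,+,+,+ on the
   last six, and suitable row offsets a_r, each quadruple contributes 0 to
   every row and column sum while the last six contribute exactly 2nk + 1. *)

Section Placement.

Variables (n : nat) (X : finType) (row col : X -> 'I_n) (v : X -> int).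
Hypothesis cell_inj : forall x y, row x = row y -> col x = col y -> x = y.

Definition placement : parray n := fun i c =>
  if [pick x | (row x == i) && (col x == c)] is Some x then Some (v x) else None.

Variant placement_spec (i c : 'I_n) : option int -> Prop :=
  | PlacementCell x of row x = i & col x = c : placement_spec i c (Some (v x))
  | PlacementEmpty of (forall x, row x = i -> col x != c) : placement_spec i c None.

Lemma placementP i c : placement_spec i c (placement i c).
Proof.
rewrite /placement.
case: (pickP (fun x => (row x == i) && (col x == c))) => [x /andP[/eqP hr /eqP hc] | hnone].
  exact: PlacementCell hr hc.
by apply: PlacementEmpty => x hr; move: (hnone x); rewrite hr eqxx => /negbT.
Qed.

Lemma placement_neq0 : (forall x, v x != 0%R) -> forall i c, placement i c != Some 0%R.
Proof. by move=> hv i c; case: placementP => // x _ _; rewrite (inj_eq Some_inj). Qed.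

Lemma filled_row_placement i :
  [set c | filled placement i c] = [set col x | x in [set x | row x == i]].
Proof.
apply/setP => c; rewrite inE /filled; case: placementP => [x hr hc | hnone] /=.
  by apply/esym/imsetP; exists x; rewrite ?inE ?hr.
by apply/esym/negbTE/imsetP => -[x]; rewrite inE => /eqP /hnone /eqP hcx /esym.
Qed.

Lemma col_inj_row i : {in [set x | row x == i] &, injective col}.
Proof. by move=> x y; rewrite !inE => /eqP hx /eqP hy /cell_inj; apply; rewrite hx hy. Qed.

Lemma card_row_placement i :
  #|[set c | filled placement i c]| = #|[set x | row x == i]|.
Proof. by rewrite filled_row_placement card_in_imset //; apply: col_inj_row. Qed.

Lemma sum_row_placement i :
  (\sum_(c < n) entry placement i c = \sum_(x in [set x | row x == i]) v x)%R.
Proof.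
rewrite (bigID (mem [set c | filled placement i c])) /=.
rewrite [X in (_ + X)%R]big1 ?addr0 => [|c]; last first.
  by rewrite inE /filled /entry; case: (placement i c).
rewrite filled_row_placement big_imset /=; last exact: col_inj_row.
apply: eq_bigr => x; rewrite inE => /eqP hr; rewrite /entry.
case: placementP => [y hry hcy | /(_ x hr)]; last by rewrite eqxx.
by rewrite (cell_inj (etrans hry (esym hr)) hcy).
Qed.

Lemma card_abs_placement (m : nat) :
  #|[set ij : 'I_n * 'I_n | (placement ij.1 ij.2 == Some m%:Z)
                         || (placement ij.1 ij.2 == Some (- m%:Z))]%R|
  = #|[set x | `|v x| == m%:Z]%R|.
Proof.
have cell_pair_inj : injective (fun x => (row x, col x)) by move=> x y [] /cell_inj.
rewrite -(card_imset _ cell_pair_inj); apply: eq_card => -[i c].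
rewrite inE /=; case: placementP => [x <- <- | hnone].
  by rewrite mem_imset // inE eqr_norml le0z_nat andbT !(inj_eq Some_inj).
by apply/esym/negbTE/imsetP => -[x _ [hi hc]]; move: (hnone x (esym hi)); rewrite hc eqxx.
Qed.

End Placement.

Lemma placement_tr n (X : finType) (row col : X -> 'I_n) (v : X -> int) i c :
  placement col row v i c = placement row col v c i.
Proof.
rewrite /placement (eq_pick (Q := fun x => (row x == c) && (col x == i))) // => x.
by rewrite andbC.
Qed.

Lemma card_col_placement n (X : finType) (row col : X -> 'I_n) (v : X -> int) c :
    (forall x y, row x = row y -> col x = col y -> x = y) ->
  #|[set i | filled (placement row col v) i c]| = #|[set x | col x == c]|.
Proof.
move=> cell_inj; rewrite -(card_row_placement v (fun x y hc hr => cell_inj x y hr hc)).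
by apply: eq_card => i; rewrite !inE /filled placement_tr.
Qed.

Lemma sum_col_placement n (X : finType) (row col : X -> 'I_n) (v : X -> int) c :
    (forall x y, row x = row y -> col x = col y -> x = y) ->
  (\sum_(i < n) entry (placement row col v) i c = \sum_(x in [set x | col x == c]) v x)%R.
Proof.
move=> cell_inj; rewrite -(sum_row_placement v (fun x y hc hr => cell_inj x y hr hc)).
by apply: eq_bigr => i _; rewrite /entry placement_tr.
Qed.

Definition ord_rot n (j : 'I_n) (e : nat) : 'I_n :=
  Ordinal (ltn_pmod (j + e) (leq_ltn_trans (leq0n j) (ltn_ord j))).

Lemma ord_rotP n (j m : 'I_n) e : (ord_rot j e == m) = (j == ord_rot m (n - e %% n)).
Proof.
have n_gt0 : 0 < n := leq_ltn_trans (leq0n j) (ltn_ord j).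
have e_cancel : (e + (n - e %% n)) %% n = 0.
  by rewrite -modnDml subnKC ?modnn // ltnW ?ltn_pmod.
rewrite -!val_eqE /=; apply/eqP/eqP => [<- | ->].
  by rewrite modnDml -addnA -(modnDmr j) e_cancel addn0 modn_small.
by rewrite modnDml -addnA [_ + e]addnC -(modnDmr m) e_cancel addn0 modn_small.
Qed.

Section CyclicDiagonals.

Variables (n k : nat) (rowoff shift : nat -> nat).
Hypothesis shift_lt : forall r, r < k -> shift r < n.
Hypothesis shift_inj : {in gtn k &, injective shift}.

Definition diag_row (x : 'I_k * 'I_n) := ord_rot x.2 (rowoff x.1).
Definition diag_col (x : 'I_k * 'I_n) := ord_rot x.2 (rowoff x.1 + shift x.1).

Lemma diag_cell_inj x y : diag_row x = diag_row y -> diag_col x = diag_col y -> x = y.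
Proof.
case: x y => [r j] [r' j'] /(congr1 val) /= hrow /(congr1 val) /=.
rewrite !addnA -modnDml hrow modnDml => /eqP; rewrite eqn_modDl.
rewrite !modn_small ?shift_lt // => /eqP /shift_inj eq_shift.
have {eq_shift} eq_r : r = r' by apply: val_inj; apply: eq_shift; apply: ltn_ord.
subst r'; move/eqP: hrow; rewrite eqn_modDr !modn_small // => /eqP eq_j.
by congr (_, _); apply: val_inj.
Qed.

Lemma diag_cells_on (e : nat -> nat) (m : 'I_n) :
  [set x : 'I_k * 'I_n | ord_rot x.2 (e x.1) == m]
  = [set (r, ord_rot m (n - e r %% n)) | r : 'I_k].
Proof.
apply/setP => -[r j]; rewrite inE /= ord_rotP.
by apply/idP/imsetP => [/eqP -> | [r' _ [-> ->]]]; [exists r | rewrite eqxx].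
Qed.

Lemma card_diag_cells_on (e : nat -> nat) (m : 'I_n) :
  #|[set x : 'I_k * 'I_n | ord_rot x.2 (e x.1) == m]| = k.
Proof. by rewrite (diag_cells_on e) card_imset ?card_ord // => r r' []. Qed.

Lemma sum_diag_cells_on (e : nat -> nat) (m : 'I_n) (F : nat -> nat -> int) :
  (\sum_(x in [set x : 'I_k * 'I_n | ord_rot x.2 (e x.1) == m]) F x.1 x.2
   = \sum_(r < k) F r (ord_rot m (n - e r %% n)))%R.
Proof. by rewrite (diag_cells_on e) big_imset //= => r r' _ _ []. Qed.

Definition diag_array (w : nat -> nat -> int) : parray n :=
  placement diag_row diag_col (fun x => w x.1 x.2).

Lemma card_row_diag_array w i : #|[set c | filled (diag_array w) i c]| = k.
Proof. rewrite card_row_placement; [exact: card_diag_cells_on | exact: diag_cell_inj]. Qed.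

Lemma card_col_diag_array w c : #|[set i | filled (diag_array w) i c]| = k.
Proof.
rewrite card_col_placement; last exact: diag_cell_inj.
exact: (card_diag_cells_on (fun r => rowoff r + shift r)).
Qed.

Lemma sum_row_diag_array w i :
  (\sum_(c < n) entry (diag_array w) i c
   = \sum_(r < k) w r (ord_rot i (n - rowoff r %% n)))%R.
Proof. rewrite sum_row_placement; [exact: sum_diag_cells_on | exact: diag_cell_inj]. Qed.

Lemma sum_col_diag_array w c :
  (\sum_(i < n) entry (diag_array w) i c
   = \sum_(r < k) w r (ord_rot c (n - (rowoff r + shift r) %% n)))%R.
Proof.
rewrite sum_col_placement; last exact: diag_cell_inj.
exact: (sum_diag_cells_on (fun r => rowoff r + shift r)).
Qed.

End CyclicDiagonals.

Lemma big_nat_offset (R : Type) (idx : R) (op : R -> R -> R) m l (F : nat -> R) :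
  \big[op/idx]_(m <= i < m + l) F i = \big[op/idx]_(i < l) F (m + i).
Proof.
rewrite -{1}[m]add0n big_addn addKn big_mkord.
by apply: eq_bigr => i _; rewrite addnC.
Qed.

Definition block_table (T : Type) (x0 : T) (quad tail : seq T) (p r : nat) : T :=
  if r < 4 * p then nth x0 quad (r %% 4) else nth x0 tail (r - 4 * p).

Lemma block_table_quad T (x0 : T) quad tail p q s : q < p -> s < 4 ->
  block_table x0 quad tail p (4 * q + s) = nth x0 quad s.
Proof.
move=> lt_qp lt_s4; rewrite /block_table ifT; last by lia.
by rewrite mulnC modnMDl modn_small.
Qed.

Lemma block_table_tail T (x0 : T) quad tail p s :
  block_table x0 quad tail p (4 * p + s) = nth x0 tail s.
Proof. by rewrite /block_table ltnNge leq_addr /= addKn. Qed.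

Definition hrowoff : nat -> nat -> nat :=
  block_table 0 [:: 2; 2; 0; 0] [:: 4; 4; 3; 3; 0; 0].
Definition hshift (p r : nat) := if r == 4 * p + 5 then 4 * p + 6 else r.
Definition hsign : nat -> nat -> int :=
  block_table 0%R [:: -1; 1; 1; -1]%R [:: -1; 1; -1; 1; 1; 1]%R.
Definition hflip (n p r j : nat) := if r == 4 * p + 5 then j else n.-1 - j.
Definition hmag (n p r j : nat) := (r * n + hflip n p r j).+1.
Definition hval (n p r j : nat) : int := (hsign p r * (hmag n p r j)%:Z)%R.

Lemma hval_quad n p q s j : q < p -> s < 4 ->
  hval n p (4 * q + s) j
  = (nth 0 [:: -1; 1; 1; -1] s * ((4 * q + s) * n + (n.-1 - j)).+1%N%:Z)%R.
Proof.
move=> lt_qp lt_s4; rewrite /hval /hsign /hmag /hflip block_table_quad // ifF //.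
by apply/eqP; lia.
Qed.

Lemma hval_tail n p s j : s < 6 ->
  hval n p (4 * p + s) j = (nth 0 [:: -1; 1; -1; 1; 1; 1] s
     * ((4 * p + s) * n + (if s == 5 then j else n.-1 - j)).+1%N%:Z)%R.
Proof. by move=> lt_s6; rewrite /hval /hsign /hmag /hflip block_table_tail eqn_add2l. Qed.

Lemma sum_hval_quad n p q (f : nat -> nat) : q < p -> (forall r, f r < n) ->
    f (4 * q) + f (4 * q + 3) = f (4 * q + 1) + f (4 * q + 2) ->
  (\sum_(s < 4) hval n p (4 * q + s) (f (4 * q + s)%N) = 0)%R.
Proof.
move=> lt_qp f_lt f_eq; rewrite !big_ord_recr big_ord0 /= !hval_quad //= !addn0.
have := f_lt (4 * q); have := f_lt (4 * q + 1).
have := f_lt (4 * q + 2); have := f_lt (4 * q + 3).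
lia.
Qed.

Lemma sum_hval_tail n p (f : nat -> nat) : (forall r, f r < n) ->
    f (4 * p) + f (4 * p + 2) + f (4 * p + 5)
    = f (4 * p + 1) + f (4 * p + 3) + f (4 * p + 4) ->
  (\sum_(s < 6) hval n p (4 * p + s) (f (4 * p + s)%N) = (2 * n * (4 * p + 6) + 1)%N%:Z)%R.
Proof.
move=> f_lt f_eq; rewrite !big_ord_recr big_ord0 /= !hval_tail //= !addn0.
have := f_lt (4 * p); have := f_lt (4 * p + 1); have := f_lt (4 * p + 2).
have := f_lt (4 * p + 3); have := f_lt (4 * p + 4); have := f_lt (4 * p + 5).
lia.
Qed.

Lemma sum_hval n p (f : nat -> nat) : (forall r, f r < n) ->
    (forall q, q < p -> f (4 * q) + f (4 * q + 3) = f (4 * q + 1) + f (4 * q + 2)) ->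
    f (4 * p) + f (4 * p + 2) + f (4 * p + 5)
    = f (4 * p + 1) + f (4 * p + 3) + f (4 * p + 4) ->
  (\sum_(r < 4 * p + 6) hval n p r (f r) = (2 * n * (4 * p + 6) + 1)%N%:Z)%R.
Proof.
move=> f_lt f_quad f_tail.
have prefix0 : (\sum_(0 <= r < 4 * p) hval n p r (f r) = 0)%R.
  rewrite mulnC big_nat_mul big_nat_cond big1 // => q /andP[/andP[_ lt_qp] _].
  rewrite mulSn [4 + _]addnC [q * 4]mulnC big_nat_offset.
  exact: sum_hval_quad lt_qp f_lt (f_quad q lt_qp).
rewrite -(big_mkord xpredT (fun r => hval n p r (f r))).
rewrite (@big_cat_nat _ _ _ (4 * p)) ?leq_addr //= prefix0 add0r big_nat_offset.
exact: sum_hval_tail.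
Qed.

Lemma hshift_low p r : r < 4 * p + 5 -> hshift p r = r.
Proof. by move=> lt_r; rewrite /hshift ifF //; apply/eqP; lia. Qed.

Lemma hcoloff_quad p q s : q < p -> s < 4 ->
  hrowoff p (4 * q + s) + hshift p (4 * q + s) = 4 * q + nth 0 [:: 2; 3; 2; 3] s.
Proof.
move=> lt_qp lt_s4; rewrite /hrowoff block_table_quad // hshift_low; last by lia.
by case: s lt_s4 => [|[|[|[|]]]] //= _; lia.
Qed.

Lemma hcoloff_tail p s : s < 6 ->
  hrowoff p (4 * p + s) + hshift p (4 * p + s)
  = 4 * p + nth 0 [:: 4; 5; 5; 6; 4; 6] s.
Proof.
rewrite /hrowoff block_table_tail /hshift eqn_add2l.
by case: s => [|[|[|[|[|[|]]]]]] //= _; lia.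
Qed.

Lemma abs_hsign p r : r < 4 * p + 6 -> `|hsign p r|%R = 1%R.
Proof.
rewrite /hsign /block_table; case: ifP => [_ _ | /negbT]; last first.
  rewrite -leqNgt => le_r lt_r; have : r - 4 * p < 6 by lia.
  by case: (r - 4 * p) => [|[|[|[|[|[|]]]]]].
have : r %% 4 < 4 by rewrite ltn_mod.
by case: (r %% 4) => [|[|[|[|]]]].
Qed.

Lemma hflip_lt n p r j : j < n -> hflip n p r j < n.
Proof. by rewrite /hflip; case: ifP => // _; lia. Qed.

Lemma hflipK n p r j : j < n -> hflip n p r (hflip n p r j) = j.
Proof. by rewrite /hflip; case: (r == _) => //; lia. Qed.

Lemma hmag_eq n p r j m : j < n ->
  (hmag n p r j == m.+1) = (r == m %/ n) && (j == hflip n p r (m %% n)).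
Proof.
move=> lt_jn; have n_gt0 : 0 < n by lia.
rewrite /hmag eqSS; apply/eqP/andP => [<- | [/eqP -> /eqP ->]].
  rewrite divnMDl // divn_small ?hflip_lt // addn0 modnMDl modn_small ?hflip_lt //.
  by rewrite hflipK.
by rewrite hflipK ?ltn_pmod // -divn_eq.
Qed.

Lemma card_hmag n p m : 0 < m <= n * (4 * p + 6) ->
  #|[set x : 'I_(4 * p + 6) * 'I_n | hmag n p x.1 x.2 == m]| = 1.
Proof.
case: m => // m /= lt_m; have n_gt0 : 0 < n by case: n lt_m.
have lt_r : m %/ n < 4 * p + 6 by rewrite ltn_divLR // mulnC.
have lt_j : hflip n p (m %/ n) (m %% n) < n by rewrite hflip_lt ?ltn_pmod.
suff -> : [set x : 'I_(4 * p + 6) * 'I_n | hmag n p x.1 x.2 == m.+1]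
          = [set (Ordinal lt_r, Ordinal lt_j)] by rewrite cards1.
apply/setP => -[r j]; rewrite !inE /= hmag_eq // xpair_eqE -!val_eqE /=.
by case: eqP => // ->.
Qed.

Lemma abs_hval n p r j : r < 4 * p + 6 -> (`|hval n p r j| = (hmag n p r j)%:Z)%R.
Proof. by move=> lt_r; rewrite /hval normrM abs_hsign // mul1r. Qed.

Definition heffter_array n p : parray n :=
  diag_array (4 * p + 6) (hrowoff p) (hshift p) (hval n p).
Arguments heffter_array : clear implicits.

Section HeffterArray.

Variables n p : nat.
Hypothesis lt_kn : 4 * p + 6 < n.

Let hshift_lt r : r < 4 * p + 6 -> hshift p r < n.
Proof. by rewrite /hshift; case: ifP => _; lia. Qed.

Let hshift_inj : {in gtn (4 * p + 6) &, injective (hshift p)}.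
Proof. by move=> r r'; rewrite !inE /hshift; do 2 case: eqP; lia. Qed.

Lemma sum_row_heffter_array i :
  (\sum_(c < n) entry (heffter_array n p) i c = (2 * n * (4 * p + 6) + 1)%N%:Z)%R.
Proof.
rewrite sum_row_diag_array //.
apply: (sum_hval (f := fun r => ord_rot i (n - hrowoff p r %% n))) => [r | q lt_qp |].
- exact: ltn_ord.
(* Rewriting the first [4 * q] to [4 * q + 0] exposes all four offsets to block_table_quad. *)
- by rewrite -{1}[4 * q]addn0 /hrowoff !block_table_quad.
- by rewrite -{1}[4 * p]addn0 /hrowoff !block_table_tail.
Qed.

Lemma sum_col_heffter_array c :
  (\sum_(i < n) entry (heffter_array n p) i c = (2 * n * (4 * p + 6) + 1)%N%:Z)%R.
Proof.
rewrite sum_col_diag_array //.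
apply: (sum_hval (f := fun r => ord_rot c (n - (hrowoff p r + hshift p r) %% n)))
  => [r | q lt_qp |].
- exact: ltn_ord.
- by rewrite -{1 2}[4 * q]addn0 !hcoloff_quad //= addnC.
- by rewrite -{1 2}[4 * p]addn0 !hcoloff_tail //=; lia.
Qed.

Lemma heffter_array_is_heffter : is_heffter n (4 * p + 6) (heffter_array n p).
Proof.
split; [|split; [|split; [|split; [|split]]]].
- apply: placement_neq0 => -[r j] /=.
  by rewrite -normr_eq0 abs_hval.
- exact: card_row_diag_array.
- exact: card_col_diag_array.
- by move=> i; rewrite sum_row_heffter_array modzz.
- by move=> c; rewrite sum_col_heffter_array modzz.
move=> m lt_m; rewrite card_abs_placement; last exact: diag_cell_inj.
apply: etrans (card_hmag lt_m); apply: eq_card => x.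
by rewrite !inE abs_hval.
Qed.

End HeffterArray.

Theorem theorem3p2 (n k : nat) :
  (n %% 4 == 1 \/ n %% 4 == 3) -> k %% 4 = 2 -> 6 <= k -> k < n ->
  exists A : parray n, is_heffter n k A.
Proof.
move=> _ k_mod4 k_ge6 lt_kn.
have [p def_k] : exists p, k = 4 * p + 6 by exists ((k - 6) %/ 4); lia.
by subst k; exists (heffter_array n p); apply: heffter_array_is_heffter.
Qed.
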